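(* Let $(N^\circ,M^\circ,L^\circ)\in OLag(V)^3$ be pairwise in general position, let $r^L:M\to N$ be the linear map with $r^L(m)-m\in L$ for all $m\in M$, and $r^L_\wedge:\bigwedge^nM\to\bigwedge^nN$ the induced map. Then $$\omega_\wedge\big(r^L_\wedge(o_M),o_M\big)=(-1)^n\,\omega_\wedge(o_M,o_N)\,\omega_\wedge(o_L,o_M)\,\omega_\wedge(o_L,o_N)^{-1}.$$
   Context: $(V,\omega)$ is a symplectic vector space of dimension $2n$ over $\mathbb F_q$, $q$ odd. An oriented Lagrangian is a pair $L^\circ=(L,o_L)$ with $L$ Lagrangian and $o_L\in\bigwedge^nL$ nonzero; $OLag(V)$ is the set of these. Lagrangians $M,L$ are in general position if $M+L=V$. For Lagrangians $A,B$ in a $2k$-dimensional symplectic space, $\omega_\wedge:\bigwedge^kA\times\bigwedge^kB\to\mathbb F_q$ is $\omega_\wedge(a_1\wedge\dots\wedge a_k,b_1\wedge\dots\wedge b_k)=(-1)^{k(k-1)/2}\det(\omega(a_i,b_j))_{i,j}$. *)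

From HB Require Import structures.
From mathcomp Require Import all_boot all_order all_algebra all_field.
Set Implicit Arguments. Unset Strict Implicit. Unset Printing Implicit Defensive.
Import GRing.Theory.
Local Open Scope ring_scope.

(* The symplectic space V of dimension 2n is modelled as row vectors
   'rV[F]_(n + n); the symplectic form is omega Om u v := u Om v^T where Om
   is an invertible antisymmetric matrix (alternating, since char F <> 2). *)
Definition omega (F : fieldType) (n : nat) (Om : 'M[F]_(n + n))
  (u v : 'rV[F]_(n + n)) : F := (u *m Om *m v^T) 0 0.

Definition symplectic_form (F : fieldType) (n : nat) (Om : 'M[F]_(n + n)) : bool :=
  (Om^T == - Om) && (Om \in unitmx).

(* An oriented Lagrangian (L, o_L) is represented by an ordered basis
   A (the rows of A) of L, with o_L = a_1 /\ ... /\ a_n.  L is the row space. *)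
Definition is_olag (F : fieldType) (n : nat) (Om : 'M[F]_(n + n))
  (A : 'M[F]_(n, n + n)) : bool :=
  row_free A && [forall i, forall j, omega Om (row i A) (row j A) == 0].

Definition gen_pos (F : fieldType) (n : nat) (A B : 'M[F]_(n, n + n)) : bool :=
  ((A + B)%MS == 1%:M)%MS.

Definition omega_wedge (F : fieldType) (n : nat) (Om : 'M[F]_(n + n))
  (A B : 'M[F]_(n, n + n)) : F :=
  (-1) ^+ (n * (n - 1) %/ 2) *
  \det (\matrix_(i < n, j < n) omega Om (row i A) (row j B)).

(* r_wedge (m_1/\../\m_n) = r m_1 /\ ... /\ r m_n, represented by its rows *)
Definition wedge_map (F : fieldType) (n : nat)
  (r : 'rV[F]_(n + n) -> 'rV[F]_(n + n)) (A : 'M[F]_(n, n + n)) : 'M[F]_(n, n + n) :=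
  \matrix_(i < n) r (row i A).

From HB Require Import structures.
From mathcomp Require Import all_boot all_order all_algebra all_field.
From mathcomp Require Import ring.
Set Implicit Arguments. Unset Strict Implicit. Unset Printing Implicit Defensive.
Import GRing.Theory.
Local Open Scope ring_scope.

(* Represent each oriented Lagrangian by the matrix whose rows
   form a basis with wedge o_L, and encode omega_wedge(A, B) as the sign
   (-1)^{n(n-1)/2} times det of the Gram matrix  gram A B = A Om B^T.
   Since r maps M into N and r - id maps M into L, we can write
     r_wedge(M) = C N   and   M = C N - E L
   for n x n matrices C, E.  Isotropy of N and L (gram N N = gram L L = 0)
   and antisymmetry of Om (gram N L = - (gram L N)^T) then compute all four
   Gram matrices in terms of C, E and K := gram L N:
     gram (C N) M = C K^T E^T,   gram M N = - E K,
     gram L M = K C^T,           gram L N = K.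
   Taking determinants, the theorem becomes a scalar identity between
   products of det C, det E, det K and signs, with (-1)^n coming from
   det (- E K); when det K = 0 both sides vanish (with 0^-1 = 0). *)

Definition gram (F : fieldType) (n : nat) (Om : 'M[F]_(n + n))
  (A B : 'M[F]_(n, n + n)) : 'M[F]_n := A *m Om *m B^T.

Section GramCalculus.
Variables (F : fieldType) (n : nat) (Om : 'M[F]_(n + n)).
Implicit Types (A B : 'M[F]_(n, n + n)) (X : 'M[F]_n).

Lemma gramE A B i j : gram Om A B i j = omega Om (row i A) (row j B).
Proof.
rewrite /omega -row_mul !mxE; apply: eq_bigr => k _.
by rewrite !mxE.
Qed.

Lemma omega_wedgeE A B :
  omega_wedge Om A B = (-1) ^+ (n * (n - 1) %/ 2) * \det (gram Om A B).
Proof. by congr (_ * \det _); apply/matrixP => i j; rewrite gramE mxE. Qed.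

Lemma gram_mull X A B : gram Om (X *m A) B = X *m gram Om A B.
Proof. by rewrite /gram !mulmxA. Qed.

Lemma gram_mulr X A B : gram Om A (X *m B) = gram Om A B *m X^T.
Proof. by rewrite /gram trmx_mul !mulmxA. Qed.

Lemma gramBl A A' B : gram Om (A - A') B = gram Om A B - gram Om A' B.
Proof. by rewrite /gram !mulmxBl. Qed.

Lemma gramBr A B B' : gram Om A (B - B') = gram Om A B - gram Om A B'.
Proof. by rewrite /gram linearB /= mulmxBr. Qed.

Lemma gram_swap A B : Om^T = - Om -> gram Om A B = - (gram Om B A)^T.
Proof.
by move=> OmT; rewrite /gram !trmx_mul trmxK OmT mulNmx mulmxN opprK mulmxA.
Qed.

Lemma gram_olag A : is_olag Om A -> gram Om A A = 0.
Proof.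
case/andP=> _ /forallP isoA; apply/matrixP => i j.
by rewrite gramE mxE; apply/eqP/(forallP (isoA i)).
Qed.

End GramCalculus.

Lemma rows_submx_factor (F : fieldType) (m k p : nat)
  (X : 'M[F]_(m, p)) (A : 'M[F]_(k, p)) :
  (forall i, (row i X <= A)%MS) -> exists C, X = C *m A.
Proof. by move=> /row_subP/submxP[C ->]; exists C. Qed.

Lemma gram_decomposition (F : fieldType) (n : nat) (Om : 'M[F]_(n + n))
  (No Lo Mo : 'M[F]_(n, n + n)) (C E : 'M[F]_n) :
  Om^T = - Om -> is_olag Om No -> is_olag Om Lo -> Mo = C *m No - E *m Lo ->
  let K := gram Om Lo No in
  [/\ gram Om (C *m No) Mo = C *m K^T *m E^T,
      gram Om Mo No = - (E *m K) & gram Om Lo Mo = K *m C^T].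
Proof.
move=> OmT /gram_olag NN /gram_olag LL -> K.
rewrite !gramBr !gramBl !gram_mull !gram_mulr NN LL (gram_swap _ _ OmT) -/K.
by rewrite !(mulmx0, mul0mx, sub0r, subr0) mulNmx mulmxN opprK mulmxA.
Qed.

(* The scalar identity left after taking determinants: s is the sign
   (-1)^{n(n-1)/2}, t = (-1)^n, and c, e, k are det C, det E, det K. *)
Lemma sign_identity (F : fieldType) (s t c e k : F) : t * t = 1 ->
  s * (c * k * e) = t * (s * (t * (e * k))) * (s * (k * c)) * (s * k)^-1.
Proof.
move=> tt; have -> : s * (c * k * e) = s * k * (c * e) by ring.
have [->|sk0] := eqVneq (s * k) 0; first by rewrite invr0 !(mulr0, mul0r).
have -> : t * (s * (t * (e * k))) * (s * (k * c)) = t * t * (s * k * (c * e)) * (s * k)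
  by ring.
by rewrite tt mul1r mulfK.
Qed.

Theorem mainTheorem4 (F : finFieldType) (n : nat) (Om : 'M[F]_(n + n))
  (No Mo Lo : 'M[F]_(n, n + n))
  (r : {linear 'rV[F]_(n + n) -> 'rV[F]_(n + n)}) :
  odd #|F| ->
  symplectic_form Om ->
  is_olag Om No -> is_olag Om Mo -> is_olag Om Lo ->
  gen_pos No Mo -> gen_pos Mo Lo -> gen_pos No Lo ->
  (forall m : 'rV[F]_(n + n), (m <= Mo)%MS ->
     (r m <= No)%MS /\ (r m - m <= Lo)%MS) ->
  omega_wedge Om (wedge_map r Mo) Mo =
  (-1) ^+ n * omega_wedge Om Mo No * omega_wedge Om Lo Mo
    * (omega_wedge Om Lo No)^-1.
Proof.
move=> _ /andP[/eqP OmT _] olagN _ olagL _ _ _ rMN_L.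
have [C rMC] : exists C, wedge_map r Mo = C *m No.
  apply: rows_submx_factor => i; rewrite rowK.
  by case: (rMN_L _ (row_sub i Mo)).
have [E rMME] : exists E, wedge_map r Mo - Mo = E *m Lo.
  apply: rows_submx_factor => i; rewrite linearB /= rowK.
  by case: (rMN_L _ (row_sub i Mo)).
have Mdec : Mo = C *m No - E *m Lo by rewrite -rMC -rMME opprB addrC subrK.
have [gram_rM gram_MN gram_LM] := gram_decomposition OmT olagN olagL Mdec.
rewrite !omega_wedgeE rMC gram_rM gram_MN gram_LM.
rewrite -scaleN1r detZ !det_mulmx !det_tr.
apply: sign_identity.
by rewrite -exprD -signr_odd oddD addbb.
Qed.
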